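(* For every realization of $X$ and every $\alpha\in(\underline{h},\infty)$, $L_\alpha=\widetilde L_\alpha\cup\Theta$.
   Context: Let $\mathbb{T}=\mathbb{R}/\mathbb{Z}$ with canonical surjection $\phi:\mathbb{R}\to\mathbb{T}$ and quotient distance $d$. Let $\mathcal{U}=\{\varnothing\}\cup\bigcup_{j\ge1}\{0,1\}^j$ be the set of finite words over $\{0,1\}$; for $u=u_1\dots u_j$ write $|u|=j$ ($|\varnothing|=0$), $\pi(u)=u_1\dots u_{j-1}$ for $j\ge1$, $\mathcal{U}^*=\mathcal{U}\setminus\{\varnothing\}$, and $u\mathcal{U}$ for the words $uw$, $w\in\mathcal{U}$. Put $x_u=\phi(\sum_{j=1}^{|u|}u_j2^{-j})$. Let $X=(X_u)_{u\in\mathcal{U}}$ be a $\{0,1\}$-valued family and $\underline{h}>0$. $S=\{u\in\mathcal{U}:X_u=1\}$; $\widetilde S=\{u\in\mathcal{U}^*:X_u=1,X_{\pi(u)}=0\}$; for $\alpha>\underline{h}$, $L_\alpha=\{x\in\mathbb{T}:d(x,x_u)<2^{-\underline{h}|u|/\alpha}\text{ for infinitely many }u\in S\}$ and $\widetilde L_\alpha$ is defined likewise with $\widetilde S$ in place of $S$. For $u\in\mathcal{U}$, $\tau_u=\{v\in u\mathcal{U}:X_{v_1\dots v_j}=1\text{ for all }j\in\{|u|,\dots,|v|\}\}$ and $\partial\tau_u=\{\zeta\in\{0,1\}^{\mathbb{N}}:\zeta_1\dots\zeta_j\in\tau_u\text{ for all }j\ge|u|\}$; $\dot x_\zeta=\sum_{j\ge1}\zeta_j2^{-j}$;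 $\Theta=\phi\big(\{\dot x_\zeta:u\in\mathcal{U},\zeta\in\partial\tau_u\}\big)$. *)

From Stdlib Require Import Reals List.
Import ListNotations.
Open Scope R_scope.

(* Finite words over {0,1}: lists of booleans; u = u_1 ... u_j. *)
Definition word := list bool.

Definition b2R (b : bool) : R := if b then 1 else 0.

(* sum_{j=1}^{|u|} u_j 2^{-j} (a representative in R of x_u) *)
Fixpoint xw (u : word) : R :=
  match u with
  | [] => 0
  | b :: u' => b2R b / 2 + xw u' / 2
  end.

(* quotient distance on T = R/Z, evaluated on representatives:
   d(phi x, phi y) = distance from x - y to the nearest integer *)
Definition dT (x y : R) : R :=
  Rmin (frac_part (x - y)) (1 - frac_part (x - y)).

Definition same_class (x y : R) : Prop := exists k : Z, x = y + IZR k.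

Definition infinitely_many (P : word -> Prop) : Prop :=
  forall l : list word, exists u, P u /\ ~ In u l.

(* the realisation X : U -> {0,1} is a function word -> bool *)
Definition inS (X : word -> bool) (u : word) : Prop := X u = true.

Definition inStilde (X : word -> bool) (u : word) : Prop :=
  u <> [] /\ X u = true /\ X (removelast u) = false.

Definition radius (h alpha : R) (u : word) : R :=
  Rpower 2 (- (h * INR (length u)) / alpha).

(* L_alpha, as a predicate on representatives x in R of points of T *)
Definition L (X : word -> bool) (h alpha : R) (x : R) : Prop :=
  infinitely_many (fun u => inS X u /\ dT x (xw u) < radius h alpha u).

Definition Ltilde (X : word -> bool) (h alpha : R) (x : R) : Prop :=
  infinitely_many (fun u => inStilde X u /\ dT x (xw u) < radius h alpha u).

Definition tau (X : word -> bool) (u v : word) : Prop :=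
  (exists w, v = u ++ w) /\
  forall j, (length u <= j <= length v)%nat -> X (firstn j v) = true.

(* infinite binary sequences zeta = zeta_1 zeta_2 ...; zeta n stands for
   zeta_{n+1}; prefix zeta j = zeta_1 ... zeta_j *)
Definition prefix (zeta : nat -> bool) (j : nat) : word := map zeta (seq 0 j).

Definition boundary (X : word -> bool) (u : word) (zeta : nat -> bool) : Prop :=
  forall j, (length u <= j)%nat -> tau X u (prefix zeta j).

Definition dotx_is (zeta : nat -> bool) (l : R) : Prop :=
  infinite_sum (fun n => b2R (zeta n) / 2 ^ (S n)) l.

Definition Theta (X : word -> bool) (x : R) : Prop :=
  exists u zeta l, boundary X u zeta /\ dotx_is zeta l /\ same_class x l.

(* Put gamma = h/alpha ∈ (0,1), so the ball of a word u has radius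
   r(u) = 2^(-gamma |u|), and call u "near" x when u ∈ S and d(x, x_u) < r(u).
   (⊇) Ltilde ⊆ L since S~ ⊆ S; if x ≡ dot x_zeta with zeta ∈ ∂tau_u, the long
   prefixes of zeta lie in S and within 2^(-j) < r of x.
   (⊆) As |x_{vw} - x_v| <= 2^(-|v|) and 2^(-|v|) << r(v) (1 - 2^(-gamma)),
   long ancestors of near words are near.  If x ∉ Ltilde, only finitely many
   words of S~ are near, so above some length M all prefixes of near words
   are in S (the longest prefix outside S would have a near child in S~).
   König's lemma gives a path zeta whose prefixes all have near extensions;
   then zeta ∈ ∂tau_{zeta|M} and d(x, dot x_zeta) = 0, so x ∈ Theta. *)

From Stdlib Require Import Reals List Lra Lia ZArith ClassicalEpsilon Classical.
Import ListNotations.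
Open Scope R_scope.

Definition dist_to_Z (t : R) : R := Rmin (frac_part t) (1 - frac_part t).

Lemma dist_to_Z_le t k : dist_to_Z t <= Rabs (t - IZR k).
Proof.
  unfold dist_to_Z. pose proof (base_fp t) as [H0 H1]. unfold frac_part in *.
  set (n := Int_part t) in *.
  destruct (Z_le_gt_dec k n) as [Hk | Hk].
  - apply IZR_le in Hk. apply Rle_trans with (t - IZR n).
    + apply Rmin_l.
    + rewrite Rabs_right; lra.
  - assert (Hk1 : IZR (n + 1) <= IZR k) by (apply IZR_le; lia).
    rewrite plus_IZR in Hk1. apply Rle_trans with (1 - (t - IZR n)).
    + apply Rmin_r.
    + rewrite Rabs_left1; lra.
Qed.

Lemma dist_to_Z_attained t : exists k, dist_to_Z t = Rabs (t - IZR k).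
Proof.
  unfold dist_to_Z. pose proof (base_fp t) as [H0 H1]. unfold frac_part in *.
  set (n := Int_part t) in *.
  destruct (Rle_dec (t - IZR n) (1 - (t - IZR n))).
  - exists n. rewrite Rmin_left by lra. rewrite Rabs_right; lra.
  - exists (n + 1)%Z. rewrite Rmin_right, plus_IZR by lra.
    rewrite Rabs_left1; lra.
Qed.

(* Reals with the same distances to the integers have the same dist_to_Z;
   this yields the symmetry of dT and its invariance under Z-translations. *)
Lemma dist_to_Z_ext t s :
  (forall k, exists m, Rabs (t - IZR k) = Rabs (s - IZR m)) ->
  (forall m, exists k, Rabs (s - IZR m) = Rabs (t - IZR k)) ->
  dist_to_Z t = dist_to_Z s.
Proof.
  intros Hts Hst.
  destruct (dist_to_Z_attained t) as [k Hk], (dist_to_Z_attained s) as [m Hm].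
  destruct (Hts k) as [m' Hm'], (Hst m) as [k' Hk'].
  apply Rle_antisym.
  - rewrite Hm, Hk'. apply dist_to_Z_le.
  - rewrite Hk, Hm'. apply dist_to_Z_le.
Qed.

Lemma dT_nonneg x y : 0 <= dT x y.
Proof.
  change (0 <= dist_to_Z (x - y)). destruct (dist_to_Z_attained (x - y)) as [k ->].
  apply Rabs_pos.
Qed.

Lemma dT_le_abs x y : dT x y <= Rabs (x - y).
Proof.
  replace (x - y) with (x - y - IZR 0) by (simpl; ring). apply dist_to_Z_le.
Qed.

Lemma dT_sym x y : dT x y = dT y x.
Proof.
  apply dist_to_Z_ext; intro k; exists (- k)%Z;
    rewrite opp_IZR, <- Rabs_Ropp; f_equal; ring.
Qed.

Lemma dT_triangle x y z : dT x z <= dT x y + dT y z.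
Proof.
  unfold dT; fold (dist_to_Z (x - z)) (dist_to_Z (x - y)) (dist_to_Z (y - z)).
  destruct (dist_to_Z_attained (x - y)) as [k1 ->].
  destruct (dist_to_Z_attained (y - z)) as [k2 ->].
  apply Rle_trans with (Rabs (x - z - IZR (k1 + k2))); [apply dist_to_Z_le |].
  rewrite plus_IZR.
  replace (x - z - (IZR k1 + IZR k2))
    with ((x - y - IZR k1) + (y - z - IZR k2)) by ring.
  apply Rabs_triang.
Qed.

Lemma dT_same_class x l y : same_class x l -> dT x y = dT l y.
Proof.
  intros [k ->]. apply dist_to_Z_ext.
  - intro m. exists (m - k)%Z. rewrite minus_IZR. f_equal. ring.
  - intro m. exists (m + k)%Z. rewrite plus_IZR. f_equal. ring.
Qed.

Lemma dT_eq0 x y : dT x y = 0 -> same_class x y.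
Proof.
  unfold dT; fold (dist_to_Z (x - y)).
  destruct (dist_to_Z_attained (x - y)) as [k ->]. intro H. exists k.
  destruct (Rcase_abs (x - y - IZR k));
    [rewrite Rabs_left in H | rewrite Rabs_right in H]; lra.
Qed.

Lemma b2R_bound b : 0 <= b2R b <= 1.
Proof. destruct b; simpl; lra. Qed.

Lemma xw_app v w : xw (v ++ w) = xw v + xw w / 2 ^ length v.
Proof.
  induction v as [| b v IH]; simpl.
  - field.
  - rewrite IH. field. apply pow_nonzero. lra.
Qed.

Lemma xw_bound w : 0 <= xw w <= 1.
Proof.
  induction w as [| b w IH]; simpl; [lra |]. pose proof (b2R_bound b). lra.
Qed.

Lemma xw_extension v w : 0 <= xw (v ++ w) - xw v <= / 2 ^ length v.
Proof.
  rewrite xw_app. pose proof (xw_bound w).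
  assert (Hp : 0 < / 2 ^ length v) by (apply Rinv_0_lt_compat, pow_lt; lra).
  unfold Rdiv. split; nra.
Qed.

Lemma dT_extension v w : dT (xw (v ++ w)) (xw v) <= / 2 ^ length v.
Proof.
  eapply Rle_trans; [apply dT_le_abs |]. pose proof (xw_extension v w).
  rewrite Rabs_right; lra.
Qed.

Lemma length_prefix z j : length (prefix z j) = j.
Proof. unfold prefix. rewrite length_map, length_seq. reflexivity. Qed.

Lemma prefix_S z j : prefix z (S j) = prefix z j ++ [z j].
Proof. unfold prefix. rewrite seq_S, map_app. reflexivity. Qed.

Lemma prefix_extends z i j : (i <= j)%nat -> exists w, prefix z j = prefix z i ++ w.
Proof.
  intro H. unfold prefix. replace j with (i + (j - i))%nat by lia.
  rewrite seq_app, map_app. eauto.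
Qed.

Lemma firstn_app_length (a r : word) : firstn (length a) (a ++ r) = a.
Proof.
  pose proof (firstn_app_2 0 a r) as E. rewrite Nat.add_0_r in E.
  rewrite E. simpl. apply app_nil_r.
Qed.

Lemma firstn_S_snoc (u : word) i : (i < length u)%nat ->
  exists b, firstn (S i) u = firstn i u ++ [b].
Proof.
  revert i. induction u as [| a u IH]; simpl; intros i Hi; [lia |].
  destruct i as [| i]; [exists a; reflexivity |].
  destruct (IH i ltac:(lia)) as [b Hb]. exists b.
  change (a :: firstn (S i) u = a :: (firstn i u ++ [b])). rewrite Hb. reflexivity.
Qed.

Lemma firstn_prefix z i j : (i <= j)%nat -> firstn i (prefix z j) = prefix z i.
Proof.
  intro H. destruct (prefix_extends z i j H) as [w ->].
  rewrite <- (length_prefix z i) at 1. apply firstn_app_length.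
Qed.

Lemma xw_prefix_partial_sum z m :
  xw (prefix z (S m)) = sum_f_R0 (fun n => b2R (z n) / 2 ^ S n) m.
Proof.
  induction m as [| m IH].
  - simpl. field.
  - rewrite (prefix_S z (S m)), xw_app, length_prefix, IH. simpl sum_f_R0.
    f_equal. simpl xw. simpl pow. field. apply pow_nonzero; lra.
Qed.

Lemma dotx_exists z : exists l, dotx_is z l.
Proof.
  destruct (growing_cv (sum_f_R0 (fun n => b2R (z n) / 2 ^ S n))) as [l Hl].
  - intro n. cbn [sum_f_R0]. pose proof (b2R_bound (z (S n))).
    assert (0 < / 2 ^ S (S n)) by (apply Rinv_0_lt_compat, pow_lt; lra).
    unfold Rdiv. nra.
  - exists 1. intros r [i ->]. rewrite <- xw_prefix_partial_sum. apply xw_bound.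
  - exists l. exact Hl.
Qed.

Lemma dotx_prefix_bound z l n : dotx_is z l ->
  0 <= l - xw (prefix z n) <= / 2 ^ n.
Proof.
  intros Hl.
  assert (Happrox : forall eps, 0 < eps ->
            - eps <= l - xw (prefix z n) <= / 2 ^ n + eps).
  { intros eps He. destruct (Hl eps He) as [N HN].
    specialize (HN (max N n) ltac:(lia)).
    rewrite <- xw_prefix_partial_sum in HN. unfold Rdist in HN.
    destruct (prefix_extends z n (S (max N n)) ltac:(lia)) as [w Hw].
    rewrite Hw in HN. pose proof (xw_extension (prefix z n) w) as D.
    rewrite length_prefix in D. apply Rabs_def2 in HN. lra. }
  split; apply le_epsilon; intros eps He; specialize (Happrox eps He); lra.
Qed.

Lemma dT_prefix_limit z l n : dotx_is z l -> dT (xw (prefix z n)) l <= / 2 ^ n.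
Proof.
  intro Hl. eapply Rle_trans; [apply dT_le_abs |].
  pose proof (dotx_prefix_bound z l n Hl). rewrite Rabs_left1; lra.
Qed.

Lemma Rpower2_pos y : 0 < Rpower 2 y.
Proof. unfold Rpower. apply exp_pos. Qed.

Lemma Rpower2_eventually_lt c eps : 0 < c -> 0 < eps ->
  exists N, forall n, (N <= n)%nat -> Rpower 2 (- (c * INR n)) < eps.
Proof.
  intros Hc He.
  assert (Hln2 : 0 < ln 2) by (rewrite <- ln_1; apply ln_increasing; lra).
  destruct (INR_unbounded (- ln eps / (c * ln 2))) as [N HN].
  exists N. intros n Hn. apply le_INR in Hn.
  unfold Rpower. rewrite <- (exp_ln eps He). apply exp_increasing.
  assert (Hlt : c * ln 2 * (- ln eps / (c * ln 2)) < c * ln 2 * INR n).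
  { apply Rmult_lt_compat_l; [apply Rmult_lt_0_compat |]; lra. }
  replace (c * ln 2 * (- ln eps / (c * ln 2))) with (- ln eps) in Hlt
    by (field; lra).
  lra.
Qed.

Lemma inv_pow2_Rpower n : / 2 ^ n = Rpower 2 (- INR n).
Proof. rewrite Rpower_Ropp, Rpower_pow by lra. reflexivity. Qed.

Lemma ratio_bounds h alpha : 0 < h -> h < alpha -> 0 < h / alpha < 1.
Proof.
  intros. split; [apply Rdiv_lt_0_compat; lra |].
  apply (Rmult_lt_reg_r alpha); [lra |].
  unfold Rdiv. rewrite Rmult_assoc, Rinv_l by lra. lra.
Qed.

Lemma radius_Rpower h alpha u : 0 < alpha ->
  radius h alpha u = Rpower 2 (- (h / alpha * INR (length u))).
Proof. intro. unfold radius. f_equal. field. lra. Qed.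

Lemma inv_pow2_lt_Rpower g n : g < 1 -> (0 < n)%nat ->
  / 2 ^ n < Rpower 2 (- (g * INR n)).
Proof.
  intros Hg Hn. rewrite inv_pow2_Rpower. apply Rpower_lt; [lra |].
  assert (0 < INR n) by (apply lt_0_INR; lia). nra.
Qed.

Lemma radius_le_length h alpha u n : 0 < h -> h < alpha -> (n <= length u)%nat ->
  radius h alpha u <= Rpower 2 (- (h / alpha * INR n)).
Proof.
  intros Hh Ha Hn. pose proof (ratio_bounds h alpha Hh Ha).
  rewrite radius_Rpower by lra. apply Rle_Rpower; [lra |].
  apply Ropp_le_contravar, Rmult_le_compat_l; [lra | apply le_INR; exact Hn].
Qed.

(* Key estimate: above some length K, a word v whose extension v ++ w lies
   in the ball of that extension also has x in its own ball, because the
   loss 2^(-|v|) in position is beaten by the gain r(v) (1 - 2^(-gamma))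
   in radius. *)
Lemma ancestor_in_ball h alpha x : 0 < h -> h < alpha -> exists K, forall v w,
  (K <= length v)%nat -> dT x (xw (v ++ w)) < radius h alpha (v ++ w) ->
  dT x (xw v) < radius h alpha v.
Proof.
  intros Hh Ha. pose proof (ratio_bounds h alpha Hh Ha) as Hg.
  set (g := h / alpha) in *.
  assert (Hq : Rpower 2 (- g) < 1).
  { rewrite <- (Rpower_O 2) by lra. apply Rpower_lt; lra. }
  destruct (Rpower2_eventually_lt (1 - g) (1 - Rpower 2 (- g)) ltac:(lra) ltac:(lra))
    as [K HK].
  exists K. intros v w Hv Hd. destruct w as [| b w].
  { rewrite app_nil_r in Hd. exact Hd. }
  pose proof (dT_extension v (b :: w)) as Hstep.
  pose proof (dT_triangle x (xw (v ++ b :: w)) (xw v)) as Htri.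
  rewrite radius_Rpower in * by lra. fold g in Hd |- *.
  rewrite length_app in Hd. simpl length in Hd.
  set (n := length v) in *.
  assert (Hshrink : Rpower 2 (- (g * INR (n + S (length w))))
                    <= Rpower 2 (- (g * INR n)) * Rpower 2 (- g)).
  { rewrite <- Rpower_plus. apply Rle_Rpower; [lra |].
    rewrite plus_INR, S_INR. pose proof (pos_INR (length w)). nra. }
  assert (Hgap : / 2 ^ n < Rpower 2 (- (g * INR n)) * (1 - Rpower 2 (- g))).
  { rewrite inv_pow2_Rpower.
    replace (- INR n) with (- (g * INR n) + - ((1 - g) * INR n)) by ring.
    rewrite Rpower_plus.
    apply Rmult_lt_compat_l; [apply Rpower2_pos | apply HK; exact Hv]. }
  nra.
Qed.

Definition maxlen (ls : list word) : nat :=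
  fold_right (fun w m => max (length w) m) 0%nat ls.

Lemma maxlen_in u ls : In u ls -> (length u <= maxlen ls)%nat.
Proof.
  induction ls as [| a ls IH]; simpl; [tauto |].
  intros [-> | H]; [lia | specialize (IH H); lia].
Qed.

Lemma not_infinitely_many (Q : word -> Prop) :
  ~ infinitely_many Q -> exists l, forall u, Q u -> In u l.
Proof.
  intro H. apply not_all_ex_not in H as [l Hl]. exists l. intros u Hu.
  apply NNPP. intro Hn. apply Hl. eauto.
Qed.

(** König's lemma for the binary tree. *)

Definition extends (w u : word) : Prop := exists r, u = w ++ r.

Lemma infinitely_many_child (Q : word -> Prop) w :
  infinitely_many (fun u => Q u /\ extends w u) ->
  infinitely_many (fun u => Q u /\ extends (w ++ [false]) u) \/
  infinitely_many (fun u => Q u /\ extends (w ++ [true]) u).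
Proof.
  intro H. apply NNPP. intro Hn. apply not_or_and in Hn as [H0 H1].
  apply not_infinitely_many in H0 as [l0 H0].
  apply not_infinitely_many in H1 as [l1 H1].
  destruct (H (w :: l0 ++ l1)) as [u [[Hu [r ->]] Hnot]].
  apply Hnot. destruct r as [| b r].
  - left. symmetry. apply app_nil_r.
  - right. apply in_or_app.
    destruct b; [right; apply H1 | left; apply H0];
      (split; [exact Hu | exists r; rewrite <- app_assoc; reflexivity]).
Qed.

Definition choose_bit (P : word -> Prop) (w : word) : bool :=
  if excluded_middle_informative (P (w ++ [false])) then false else true.

Fixpoint greedy_path (P : word -> Prop) (n : nat) : word :=
  match n with
  | O => []
  | S n => greedy_path P n ++ [choose_bit P (greedy_path P n)]
  end.

Lemma koenig (P : word -> Prop) :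
  P [] -> (forall w, P w -> P (w ++ [false]) \/ P (w ++ [true])) ->
  exists z, forall n, P (prefix z n).
Proof.
  intros H0 Hchild. exists (fun k => choose_bit P (greedy_path P k)).
  assert (Hpath : forall n,
             prefix (fun k => choose_bit P (greedy_path P k)) n = greedy_path P n).
  { induction n as [| n IH]; [reflexivity |]. rewrite prefix_S, IH. reflexivity. }
  intro n. rewrite Hpath. induction n as [| n IH]; [exact H0 |].
  simpl. unfold choose_bit.
  destruct (excluded_middle_informative (P (greedy_path P n ++ [false]))) as [Hf | Hf];
    [exact Hf |].
  destruct (Hchild _ IH); [contradiction | assumption].
Qed.

Section Inclusions.

Variables (X : word -> bool) (h alpha x : R).
Hypotheses (Hh : 0 < h) (Ha : h < alpha).

Definition near (u : word) : Prop := inS X u /\ dT x (xw u) < radius h alpha u.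

Lemma Ltilde_subset_L : Ltilde X h alpha x -> L X h alpha x.
Proof.
  intros Ht ls. destruct (Ht ls) as [u [[[_ [Hx _]] Hd] Hn]].
  exists u. repeat split; assumption.
Qed.

Lemma Theta_subset_L : Theta X x -> L X h alpha x.
Proof.
  intros [u0 [z [l [Hb [Hl Hc]]]]] ls.
  pose proof (ratio_bounds h alpha Hh Ha) as Hg.
  set (j := S (max (length u0) (maxlen ls))).
  exists (prefix z j). split; [split |].
  - destruct (Hb j ltac:(unfold j; lia)) as [_ Htau].
    specialize (Htau j). rewrite length_prefix, firstn_prefix in Htau by lia.
    apply Htau. unfold j; lia.
  - rewrite (dT_same_class _ _ _ Hc), dT_sym.
    eapply Rle_lt_trans; [apply dT_prefix_limit, Hl |].
    rewrite radius_Rpower, length_prefix by lra.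
    apply inv_pow2_lt_Rpower; [lra | unfold j; lia].
  - intro Hin. apply maxlen_in in Hin. rewrite length_prefix in Hin. unfold j in Hin; lia.
Qed.

(* If only the words of the finite list lt are near x and in S~, then from
   a suitable length M on, all prefixes of a near word lie in S: otherwise
   the longest prefix outside S has a near child in S~ of length > M. *)
Lemma near_prefixes_in_S K M lt :
  (forall v w, (K <= length v)%nat -> dT x (xw (v ++ w)) < radius h alpha (v ++ w) ->
     dT x (xw v) < radius h alpha v) ->
  (forall v, inStilde X v /\ dT x (xw v) < radius h alpha v -> In v lt) ->
  (K <= M)%nat -> (maxlen lt < M)%nat ->
  forall u, near u -> forall j, (M <= j <= length u)%nat -> X (firstn j u) = true.
Proof.
  intros Hanc Hlt HKM HM u [Hu Hd] j Hj.
  assert (Hdown : forall k i, (M <= i)%nat -> (i + k = length u)%nat ->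
                    X (firstn i u) = true).
  { induction k as [| k IH]; intros i Hi Hik.
    { rewrite Nat.add_0_r in Hik. subst i. rewrite firstn_all. exact Hu. }
    destruct (X (firstn i u)) eqn:E; [reflexivity | exfalso].
    destruct (firstn_S_snoc u i ltac:(lia)) as [b Hb].
    assert (Hlen : length (firstn (S i) u) = S i) by (apply firstn_length_le; lia).
    assert (Hin : In (firstn (S i) u) lt).
    { apply Hlt. repeat split.
      - intro Hnil. rewrite Hnil in Hlen. discriminate.
      - apply IH; lia.
      - rewrite Hb, removelast_last. exact E.
      - apply (Hanc _ (skipn (S i) u)); [lia |]. rewrite firstn_skipn. exact Hd. }
    apply maxlen_in in Hin. lia. }
  apply (Hdown (length u - j)%nat j); lia.
Qed.

Lemma path_in_boundary M z :
  (forall n, exists u, near u /\ extends (prefix z n) u) ->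
  (forall u, near u -> forall j, (M <= j <= length u)%nat -> X (firstn j u) = true) ->
  boundary X (prefix z M) z.
Proof.
  intros Hpath Hprefix j Hj. rewrite length_prefix in Hj. split.
  { apply prefix_extends. exact Hj. }
  intros i [Hi1 Hi2]. rewrite length_prefix in Hi1, Hi2.
  rewrite firstn_prefix by lia.
  destruct (Hpath i) as [u [Hu [r ->]]].
  rewrite <- (firstn_app_length (prefix z i) r), length_prefix.
  apply Hprefix; [exact Hu |]. rewrite length_app, length_prefix. lia.
Qed.

(* If every prefix of zeta has a near extension, then x ≡ dot x_zeta: the
   distance is at most r(u) + 2 * 2^(-n) for a near extension u of zeta|n. *)
Lemma path_limit z l :
  dotx_is z l -> (forall n, exists u, near u /\ extends (prefix z n) u) ->
  same_class x l.
Proof.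
  intros Hl Hpath. apply dT_eq0, Rle_antisym; [| apply dT_nonneg].
  apply le_epsilon. intros eps He. rewrite Rplus_0_l.
  pose proof (ratio_bounds h alpha Hh Ha) as Hg.
  destruct (Rpower2_eventually_lt (h / alpha) (eps / 3) ltac:(lra) ltac:(lra))
    as [N1 HN1].
  destruct (Rpower2_eventually_lt 1 (eps / 3) ltac:(lra) ltac:(lra)) as [N2 HN2].
  set (n := max N1 N2).
  specialize (HN1 n ltac:(unfold n; lia)). specialize (HN2 n ltac:(unfold n; lia)).
  rewrite Rmult_1_l, <- inv_pow2_Rpower in HN2.
  destruct (Hpath n) as [u [[_ Hd] [r Hr]]].
  assert (Hrad : radius h alpha u <= Rpower 2 (- (h / alpha * INR n))).
  { apply radius_le_length; [exact Hh | exact Ha |].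
    rewrite Hr, length_app, length_prefix. lia. }
  pose proof (dT_extension (prefix z n) r) as Hstep.
  rewrite length_prefix, <- Hr in Hstep.
  pose proof (dT_prefix_limit z l n Hl).
  pose proof (dT_triangle x (xw u) l).
  pose proof (dT_triangle (xw u) (xw (prefix z n)) l).
  lra.
Qed.

Lemma L_minus_Ltilde_subset_Theta :
  L X h alpha x -> ~ Ltilde X h alpha x -> Theta X x.
Proof.
  intros HL Hnt. apply not_infinitely_many in Hnt as [lt Hlt].
  destruct (ancestor_in_ball h alpha x Hh Ha) as [K Hanc].
  set (M := max K (S (maxlen lt))).
  pose proof (near_prefixes_in_S K M lt Hanc Hlt ltac:(unfold M; lia)
                ltac:(unfold M; lia)) as Hprefix.
  destruct (koenig (fun w => infinitely_many (fun u => near u /\ extends w u)))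
    as [z Hz].
  - intro ls. destruct (HL ls) as [u [Hu Hn]].
    exists u. split; [split; [exact Hu | exists u; reflexivity] | exact Hn].
  - apply infinitely_many_child.
  - assert (Hpath : forall n, exists u, near u /\ extends (prefix z n) u).
    { intro n. destruct (Hz n []) as [u [Hu _]]. eauto. }
    destruct (dotx_exists z) as [l Hl].
    exists (prefix z M), z, l. split; [| split].
    + exact (path_in_boundary M z Hpath Hprefix).
    + exact Hl.
    + exact (path_limit z l Hl Hpath).
Qed.

End Inclusions.

Theorem mainTheorem8 (X : word -> bool) (h alpha : R) :
  0 < h -> h < alpha ->
  forall x : R, L X h alpha x <-> (Ltilde X h alpha x \/ Theta X x).
Proof.
  intros Hh Ha x. split.
  - intro HL. destruct (classic (Ltilde X h alpha x)) as [Ht | Hnt].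
    + left. exact Ht.
    + right. exact (L_minus_Ltilde_subset_Theta X h alpha x Hh Ha HL Hnt).
  - intros [Ht | Hth].
    + exact (Ltilde_subset_L X h alpha x Ht).
    + exact (Theta_subset_L X h alpha x Hh Ha Hth).
Qed.
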